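(* Suppose $n\ge3$. For $\ell\ge0$ and $a=(a_1,\dots,a_\ell)\in\{1,\dots,n\}^\ell$, let $$|a_1a_2\cdots a_\ell\rangle=\sum_{k\ge0}\frac{(-1)^k}{k!}\,f_k\!\left(-\ell-\tfrac n2\right)F^k\Big[(\operatorname{ad}E)^k(x^{a_1}x^{a_2}\cdots x^{a_\ell})\Big](1)\in\mathbb{C}[x^1,\dots,x^n],$$ where a differential operator applied to $1$ means its action on the constant polynomial $1$, and $F^k$ acts by multiplication. Then $$|a_1a_2\cdots a_\ell\rangle=\sum_{k\ge0}f_k\!\left(-\ell-\tfrac n2\right)\Big(\tfrac12x_bx^b\Big)^k\sum_{M}\ \prod_{\{i,j\}\in M}\eta^{a_ia_j}\prod_{m\in\{1,\dots,\ell\}\setminus\bigcup M}x^{a_m},$$ where for each $k$ the inner sum runs over all sets $M$ of $k$ pairwise disjoint 2-element subsets of $\{1,\dots,\ell\}$ (i.e. the inner sum is the sum of all distinct degree $\ell-2k$ ordered $\eta x$-monomials $\eta^{b_1b_2}\cdots\eta^{b_{2k-1}b_{2k}}x^{b_{2k+1}}\cdots x^{b_\ell}$ with $b$ a permutation of $a$, positions of $a$ being regarded as distinct).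
   Context: $(\eta_{ab})$ is a non-degenerate symmetric $n\times n$ matrix (entries complex, or formal central variables) with inverse $(\eta^{ab})$. Repeated upper/lower indices are summed over $\{1,\dots,n\}$; $x_a=\eta_{ab}x^b$, $\partial_a=\partial/\partial x^a$, $\partial^a=\eta^{ab}\partial_b$. Operators on polynomials: $E=\frac i2\partial_a\partial^a$, $F=\frac i2x_ax^a$ (multiplication), $H=-\frac12(x^a\partial_a+\partial_ax^a)$, which acts on homogeneous polynomials of degree $d$ by the scalar $-d-\frac n2$; $(\operatorname{ad}E)(D)=ED-DE$ for a differential operator $D$. $f_0=1$ and $f_k(t)=\big((t+2)(t+3)\cdots(t+1+k)\big)^{-1}$ for $k\ge1$. (In the paper, $|a_1\cdots a_\ell\rangle=P(x^{a_1}\cdots x^{a_\ell}+I)\cdot1$ with $P$ the extremal projector of $\mathfrak{sl}_2$; the definition above is this expression written out, with $H$ evaluated on the resulting degree-$\ell$ polynomial.) *)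

From HB Require Import structures.
From mathcomp Require Import all_boot all_order all_algebra.
From mathcomp Require Import mpoly.
Set Implicit Arguments. Unset Strict Implicit. Unset Printing Implicit Defensive.
Import Order.TTheory GRing.Theory Num.Theory.
Local Open Scope ring_scope.

Section Defs.
Variables (R : numClosedFieldType) (n : nat).

Definition polyOp := {mpoly R[n]} -> {mpoly R[n]}.

(* eta^{ab} = inverse matrix entries *)
Definition etaUp (eta : 'M[R]_n) (a b : 'I_n) : R := invmx eta a b.

Definition Eop (eta : 'M[R]_n) : polyOp := fun p =>
  ('i / 2%:R) *: \sum_(a < n) \sum_(b < n) etaUp eta a b *: mderiv a (mderiv b p).

(* x_b x^b = eta_{bc} x^c x^b *)
Definition xsq (eta : 'M[R]_n) : {mpoly R[n]} :=
  \sum_(b < n) \sum_(c < n) eta b c *: ('X_b * 'X_c).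

Definition Fpoly (eta : 'M[R]_n) : {mpoly R[n]} := ('i / 2%:R) *: xsq eta.

Definition adop (E D : polyOp) : polyOp := fun p => E (D p) - D (E p).

Definition mulop (q : {mpoly R[n]}) : polyOp := fun p => q * p.

(* f_k(t) = ((t+2)(t+3)...(t+1+k))^{-1}; empty product for k = 0 gives f_0 = 1 *)
Definition fk (k : nat) (t : R) : R := (\prod_(2 <= j < k.+2) (t + j%:R))^-1.

Definition xmon (l : nat) (a : 'I_l -> 'I_n) : {mpoly R[n]} :=
  \prod_(i < l) 'X_(a i).

Definition tpar (l : nat) : R := - l%:R - n%:R / 2%:R.

(* |a_1 ... a_l> ; the sum over k >= 0 is truncated at k <= l,
   beyond which (ad E)^k(x^a)(1) = E^k(x^a) = 0 (degree reasons). *)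
Definition ket (eta : 'M[R]_n) (l : nat) (a : 'I_l -> 'I_n) : {mpoly R[n]} :=
  \sum_(k < l.+1)
    ((-1) ^+ k / (k`!)%:R * fk k (tpar l)) *:
      (Fpoly eta ^+ k * iter k (adop (Eop eta)) (mulop (xmon a)) 1).

Definition is_kmatching (l k : nat) (M : {set {set 'I_l}}) : bool :=
  [&& #|M| == k, [forall S in M, #|S| == 2] & trivIset M].

Definition matching_term (eta : 'M[R]_n) (l : nat) (a : 'I_l -> 'I_n)
    (M : {set {set 'I_l}}) : {mpoly R[n]} :=
  (\prod_(S in M) \prod_(i in S) \prod_(j in S | (i < j)%N) etaUp eta (a i) (a j))
    *: \prod_(m in ~: cover M) 'X_(a m).

End Defs.

From HB Require Import structures.
From mathcomp Require Import all_boot all_order all_algebra.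
From mathcomp Require Import mpoly.
From mathcomp Require Import ring zify.
Import Order.TTheory GRing.Theory Num.Theory.
Local Open Scope ring_scope.

(* Since E kills constants, [(ad E)^k(x^a)](1) = E^k(x^a), and E = (i/2) L with
   L = eta^{bc} d_b d_c.  On a product of variables indexed by a set A of
   positions, L removes an ordered pair (m, m') of positions with weight
   eta^{a_m' a_m}.  Iterating, L^k(x^a) = 2^k k! times the sum over k-matchings
   M of prod_{ {i,j} in M } eta^{a_i a_j} times the unmatched variables: a
   (k+1)-matching arises exactly 2(k+1) times as a new ordered pair added to a
   k-matching of the remaining positions.  The scalar
   (-1)^k/k! (i/2)^k (i/2)^k 2^k k! then collapses to 2^-k. *)

Set Implicit Arguments. Unset Strict Implicit. Unset Printing Implicit Defensive.

Section IterLinear.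
Variables (R : pzRingType) (V : lmodType R) (f : {linear V -> V}).

Lemma iter_linear_sum k I (r : seq I) (P : pred I) (F : I -> V) :
  iter k f (\sum_(i <- r | P i) F i) = \sum_(i <- r | P i) iter k f (F i).
Proof. by elim: k => //= k ->; rewrite linear_sum. Qed.

Lemma iter_linearZ k c v : iter k f (c *: v) = c *: iter k f v.
Proof. by elim: k => //= k ->; rewrite linearZ. Qed.

End IterLinear.

Section Laplacian.
Variables (R : comNzRingType) (n : nat) (g : 'I_n -> 'I_n -> R).

Definition laplacian (p : {mpoly R[n]}) : {mpoly R[n]} :=
  \sum_(b < n) \sum_(c < n) g b c *: mderiv b (mderiv c p).

Lemma laplacian_is_linear : linear laplacian.
Proof.
move=> s p q; rewrite /laplacian scaler_sumr -big_split; apply: eq_bigr => b _.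
rewrite scaler_sumr -big_split; apply: eq_bigr => c _.
by rewrite !mderivD !mderivZ scalerDr !scalerA mulrC.
Qed.

HB.instance Definition _ :=
  GRing.isLinear.Build R {mpoly R[n]} {mpoly R[n]} _ laplacian laplacian_is_linear.

Lemma laplacianC c : laplacian c%:MP = 0.
Proof.
rewrite /laplacian big1 // => b _; rewrite big1 // => c' _.
by rewrite mderivC linear0 scaler0.
Qed.

Lemma mderivX1 (c j : 'I_n) : mderiv c ('X_j : {mpoly R[n]}) = (j == c)%:R.
Proof.
rewrite mderivX mnm1E; case: eqP => [->|_]; last by rewrite scale0r.
suff -> : (U_(c) - U_(c) = 0)%MM by rewrite mpolyX0 scale1r.
by apply/mnmP => i; rewrite mnmBE subnn mnm0E.
Qed.

Variables (l : nat) (a : 'I_l -> 'I_n).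
Implicit Types (m : 'I_l) (A : {set 'I_l}).

Definition xmon_on (A : {set 'I_l}) : {mpoly R[n]} := \prod_(m in A) 'X_(a m).

Lemma xmon_onD1 m A : m \in A -> xmon_on A = 'X_(a m) * xmon_on (A :\ m).
Proof. exact: big_setD1. Qed.

Lemma mderiv_xmon_on c A :
  mderiv c (xmon_on A) = \sum_(m in A | a m == c) xmon_on (A :\ m).
Proof.
have [N] := ubnP #|A|; elim: N A => // N IH A ltAN.
have [->|[x xA]] := set_0Vmem A.
  by rewrite /xmon_on big_set0 -mpolyC1 mderivC big_pred0 // => m; rewrite inE.
rewrite (xmon_onD1 xA) mderivM mderivX1 IH; last first.
  by move: ltAN; rewrite (cardsD1 x A) xA.
rewrite mulr_sumr [RHS]big_mkcondr (big_setD1 x xA) /= -big_mkcondr.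
congr (_ + _); first by case: eqP; rewrite ?mul1r ?mul0r.
apply: eq_bigr => m /andP[/setD1P[mx _] _].
have xAm : x \in A :\ m by rewrite !inE eq_sym mx.
by rewrite [RHS](xmon_onD1 xAm) !setDDl setUC.
Qed.

Lemma sum_fibers (V : nmodType) A (F : 'I_n -> 'I_l -> V) :
  \sum_(c < n) \sum_(m in A | a m == c) F c m = \sum_(m in A) F (a m) m.
Proof.
rewrite (exchange_big_dep predT) //= [RHS]big_mkcond; apply: eq_bigr => m _.
case: (m \in A); last by rewrite big_pred0.
by rewrite (big_pred1 (a m)) // => c; rewrite /= eq_sym.
Qed.

Lemma laplacian_xmon_on A :
  laplacian (xmon_on A) =
  \sum_(m in A) \sum_(m' in A :\ m) g (a m') (a m) *: xmon_on (A :\ m :\ m').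
Proof.
rewrite /laplacian.
under eq_bigr => b _ do under eq_bigr => c _ do
  rewrite mderiv_xmon_on (raddf_sum (mderiv b)) scaler_sumr.
under eq_bigr => b _ do rewrite sum_fibers.
rewrite exchange_big /=; apply: eq_bigr => m _.
under eq_bigr => b _ do rewrite mderiv_xmon_on scaler_sumr.
by rewrite sum_fibers.
Qed.

End Laplacian.

Arguments xmon_on {R n l} a A.

Section Matchings.
Variable l : nat.
Implicit Types (m : 'I_l) (A B S : {set 'I_l}) (M N : {set {set 'I_l}}).

Definition kmatching_in k A M := is_kmatching k M && (cover M \subset A).

Lemma is_kmatchingP k M :
  reflect [/\ #|M| = k, {in M, forall S, #|S| = 2} & trivIset M] (is_kmatching k M).
Proof.
apply: (iffP and3P) => [[/eqP cM /forall_inP cS tM]|[cM cS tM]].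
  by split=> // S /cS /eqP.
by split=> //; [apply/eqP | apply/forall_inP => S /cS ->].
Qed.

Lemma kmatching_in0 A M : kmatching_in 0 A M = (M == set0).
Proof.
apply/idP/eqP => [/andP[/is_kmatchingP[/cards0_eq] //]|->].
rewrite /kmatching_in /cover big_set0 sub0set andbT.
apply/is_kmatchingP; split; first exact: cards0.
  by move=> S; rewrite inE.
by apply/trivIsetP => S; rewrite inE.
Qed.

Lemma disjoint_kmatching_compl k A S M B :
  kmatching_in k (A :\: S) M -> B \in M -> [disjoint S & B].
Proof.
case/andP=> _ covM BM; rewrite disjoint_sym disjoints_subset.
apply: subset_trans (bigcup_sup B BM) _; apply: subset_trans covM _.
by rewrite setDE subsetIr.
Qed.

Lemma notin_kmatching_compl k A S M :
  S != set0 -> kmatching_in k (A :\: S) M -> S \notin M.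
Proof.
move=> S0 MAS; apply: contra S0 => SM.
by have := disjoint_kmatching_compl MAS SM; rewrite -setI_eq0 setIid.
Qed.

Lemma kmatching_in_setU1 k A S M : #|S| = 2 -> S \subset A ->
  kmatching_in k (A :\: S) M -> kmatching_in k.+1 A (S |: M).
Proof.
move=> cS SA MAS; have /andP[/is_kmatchingP[cM cMS tM] covM] := MAS.
have S0 : S != set0 by rewrite -card_gt0 cS.
have SM := notin_kmatching_compl S0 MAS.
have [tSM _] : trivIset (S |: M) /\ S \notin M.
  apply: trivIsetU1 => // [B BM|]; first exact: disjoint_kmatching_compl MAS BM.
  by apply/negP => /cMS; rewrite cards0.
apply/andP; split.
  apply/is_kmatchingP; split=> //; first by rewrite cardsU1 SM cM.
  by move=> B /setU1P[->|/cMS].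
rewrite /cover bigcup_setU big_set1 subUset SA /=.
by apply: subset_trans covM _; rewrite subsetDl.
Qed.

Lemma kmatching_in_setD1 k A S N : S \in N ->
  kmatching_in k.+1 A N -> kmatching_in k (A :\: S) (N :\ S).
Proof.
move=> SN /andP[/is_kmatchingP[cN cNS tN] covN]; apply/andP; split.
  apply/is_kmatchingP; split.
  - by move: cN; rewrite (cardsD1 S) SN => -[].
  - by move=> B /setD1P[_ /cNS].
  - by apply: trivIsetS tN; apply: subsetDl.
apply/subsetP => x /bigcupP[B /setD1P[BS BN] xB].
have /trivIsetP/(_ B S BN SN BS) dBS := tN.
rewrite inE (disjointFr dBS xB) /=.
by apply: (subsetP covN); apply/bigcupP; exists B.
Qed.

Lemma sum_kmatching_setU1 (V : nmodType) k A S (f : {set {set 'I_l}} -> V) :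
  #|S| = 2 -> S \subset A ->
  \sum_(M | kmatching_in k (A :\: S) M) f (S |: M) =
  \sum_(N | kmatching_in k.+1 A N && (S \in N)) f N.
Proof.
move=> cS SA; have S0 : S != set0 by rewrite -card_gt0 cS.
rewrite [RHS](reindex_onto (fun M => S |: M) (fun N => N :\ S)) /=; last first.
  by move=> N /andP[_ /setD1K].
apply: eq_bigl => M; apply/idP/idP => [MAS|].
  by rewrite kmatching_in_setU1 // setU11 setU1K ?eqxx ?(notin_kmatching_compl S0 MAS).
by case/andP=> /andP[/(kmatching_in_setD1 (setU11 S M)) MAS _] /eqP <-.
Qed.

Lemma card2_mem_pair B m : #|B| = 2 -> m \in B -> exists2 p, p != m & B = [set m; p].
Proof.
move=> /eqP/cards2P[x [y [xy ->]]]; rewrite !inE => /orP[]/eqP->.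
  by exists y; rewrite // eq_sym.
by exists x; rewrite // setUC.
Qed.

Lemma count_partners k A M m : kmatching_in k A M -> m \in A ->
  (\sum_(m' in A :\ m) ([set m; m'] \in M : nat))%N = (m \in cover M : nat).
Proof.
move=> /andP[/is_kmatchingP[_ cMS tM] covM] mA.
have pair_cover m' : [set m; m'] \in M -> m \in cover M.
  by move=> pM; apply/bigcupP; exists [set m; m']; rewrite // !inE eqxx.
have [mM|mM] := boolP (m \in cover M); last first.
  rewrite big1 // => m' _.
  by case: ([set m; m'] \in M) / idP => // /pair_cover; rewrite (negbTE mM).
have BM := pblock_mem mM; have mB : m \in pblock M m by rewrite mem_pblock.
have [p pm defB] := card2_mem_pair (cMS _ BM) mB.
have pA : p \in A :\ m.
  rewrite !inE pm; apply: (subsetP covM); apply/bigcupP.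
  by exists (pblock M m); rewrite // defB !inE eqxx orbT.
rewrite (bigD1 p pA) /= -defB BM big1 // => m' /andP[/setD1P[m'm _] m'p].
case: ([set m; m'] \in M) / idP => // m'M.
have := def_pblock tM m'M (set21 m m'); rewrite defB => /setP/(_ m').
by rewrite !inE eqxx orbT (negbTE m'm) (negbTE m'p).
Qed.

Lemma count_pairs_kmatching k A M : kmatching_in k A M ->
  (\sum_(m in A) \sum_(m' in A :\ m) ([set m; m'] \in M : nat))%N = (2 * k)%N.
Proof.
move=> MA; have /andP[/is_kmatchingP[cM cMS tM] covM] := MA.
rewrite (eq_bigr (fun m => (m \in cover M : nat))); last first.
  by move=> m; apply: count_partners MA.
rewrite -big_mkcondr (eq_bigl (mem (cover M))); last first.
  by move=> m; case mM: (m \in cover M); rewrite ?andbF // (subsetP covM).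
by rewrite sum1_card -(eqP tM) (eq_bigr (fun=> 2%N)) // sum_nat_const cM mulnC.
Qed.

Lemma sum_kmatching_extend (V : nmodType) k A (f : {set {set 'I_l}} -> V) :
  \sum_(m in A) \sum_(m' in A :\ m)
     \sum_(M | kmatching_in k (A :\ m :\ m') M) f ([set m; m'] |: M) =
  (\sum_(N | kmatching_in k.+1 A N) f N) *+ (2 * k.+1).
Proof.
have extend m m' : m \in A -> m' \in A :\ m ->
    \sum_(M | kmatching_in k (A :\ m :\ m') M) f ([set m; m'] |: M) =
    \sum_(N | kmatching_in k.+1 A N) f N *+ ([set m; m'] \in N).
  move=> mA /setD1P[m'm m'A]; rewrite setDDl.
  under [RHS]eq_bigr do rewrite mulrb.
  rewrite -big_mkcondr sum_kmatching_setU1 ?cards2 1?eq_sym ?m'm //.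
  by apply/subsetP => x /set2P[]->.
under eq_bigr => m mA do under eq_bigr => m' m'A do rewrite (extend m m' mA m'A).
under eq_bigr => m _ do rewrite exchange_big /=.
rewrite exchange_big -sumrMnl /=; apply: eq_bigr => N NA.
rewrite -(count_pairs_kmatching NA) -sumrMnr.
by apply: eq_bigr => m _; rewrite -sumrMnr.
Qed.

End Matchings.

Section MatchingSum.
Variables (R : comNzRingType) (n : nat) (g : 'I_n -> 'I_n -> R).
Hypothesis g_sym : forall b c, g b c = g c b.
Variables (l : nat) (a : 'I_l -> 'I_n).
Implicit Types (k : nat) (m : 'I_l) (A S : {set 'I_l}) (M : {set {set 'I_l}}).

Definition pair_weight S : R :=
  \prod_(i in S) \prod_(j in S | (i < j)%N) g (a i) (a j).

Definition matching_weight M : R := \prod_(S in M) pair_weight S.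

Definition matching_sum k A : {mpoly R[n]} :=
  \sum_(M | kmatching_in k A M) matching_weight M *: xmon_on a (A :\: cover M).

Lemma pair_weight2 m m' : m != m' -> pair_weight [set m; m'] = g (a m) (a m').
Proof.
wlog lt_mm' : m m' / (m < m')%N => [hwlog mm'|mm'].
  have [/hwlog->//|/hwlog pw|/val_inj eq_mm'] := ltngtP m m'.
    by rewrite setUC g_sym pw // eq_sym.
  by rewrite eq_mm' eqxx in mm'.
have m'm : m \notin [set m'] by rewrite inE.
rewrite /pair_weight big_setU1 //= big_set1 !big_mkcondr /= !big_setU1 //= !big_set1.
by rewrite ltnn lt_mm' ltnNge ltnW //= ltnn !mul1r mulr1.
Qed.

Lemma matching_sum0 A : matching_sum 0 A = xmon_on a A.
Proof.
rewrite /matching_sum (big_pred1 set0) => [|M]; last exact: kmatching_in0.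
by rewrite /matching_weight big_set0 scale1r /cover big_set0 setD0.
Qed.

Lemma matching_term_extend k A m m' M :
  m \in A -> m' \in A :\ m -> kmatching_in k (A :\ m :\ m') M ->
  g (a m') (a m) *: (matching_weight M *: xmon_on a (A :\ m :\ m' :\: cover M)) =
  matching_weight ([set m; m'] |: M) *: xmon_on a (A :\: cover ([set m; m'] |: M)).
Proof.
move=> mA /setD1P[m'm _]; rewrite setDDl => MA.
have pairM : [set m; m'] \notin M.
  by apply: notin_kmatching_compl MA; apply/set0Pn; exists m; rewrite set21.
rewrite /matching_weight big_setU1 //= pair_weight2 1?eq_sym // g_sym scalerA.
by rewrite /cover bigcup_setU big_set1 setDDl.
Qed.

Lemma iter_laplacian_xmon_on k A :
  iter k (laplacian g) (xmon_on a A) = (2 ^ k * k`!)%:R *: matching_sum k A.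
Proof.
elim: k A => [|k IH] A; first by rewrite /= matching_sum0 scale1r.
rewrite iterSr laplacian_xmon_on iter_linear_sum.
under eq_bigr => m _ do rewrite iter_linear_sum.
under eq_bigr => m mA do under eq_bigr => m' m'A do
  rewrite iter_linearZ IH /matching_sum scalerA mulrC -scalerA
    scaler_sumr (eq_bigr _ (fun M => matching_term_extend (M := M) mA m'A)).
under eq_bigr => m _ do rewrite -scaler_sumr.
rewrite -scaler_sumr
  (sum_kmatching_extend k A (fun N => matching_weight N *: xmon_on a (A :\: cover N))).
rewrite -scaler_nat scalerA -natrM.
by congr (_%:R *: _); rewrite expnS factS; lia.
Qed.

End MatchingSum.

Section AdjointAction.
Variables (R : numClosedFieldType) (n : nat) (E D : polyOp R n).
Hypotheses (E0 : E 0 = 0) (D0 : D 0 = 0).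

Lemma iter_adop0 k : iter k (adop E) D 0 = 0.
Proof. by elim: k => //= k IH; rewrite /adop IH E0 IH subr0. Qed.

Lemma iter_adop1 k : E 1 = 0 -> iter k (adop E) D 1 = iter k E (D 1).
Proof. by move=> E1; elim: k => //= k IH; rewrite {1}/adop IH E1 iter_adop0 subr0. Qed.

End AdjointAction.

Section LaplaceOperator.
Variables (R : numClosedFieldType) (n : nat) (eta : 'M[R]_n).

Lemma etaUp_sym : eta^T = eta -> forall b c, etaUp eta b c = etaUp eta c b.
Proof. by move=> eta_sym b c; rewrite /etaUp -{1}eta_sym -trmx_inv mxE. Qed.

Lemma EopE p : Eop eta p = ('i / 2%:R) *: laplacian (etaUp eta) p.
Proof. by []. Qed.

Lemma iter_Eop k p :
  iter k (Eop eta) p = ('i / 2%:R) ^+ k *: iter k (laplacian (etaUp eta)) p.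
Proof. by elim: k => [|k /= ->]; rewrite ?scale1r // EopE linearZ scalerA -exprS. Qed.

Lemma Eop0 : Eop eta 0 = 0.
Proof. by rewrite EopE linear0 scaler0. Qed.

Lemma Eop1 : Eop eta 1 = 0.
Proof. by rewrite EopE -mpolyC1 laplacianC scaler0. Qed.

End LaplaceOperator.

Lemma ket_coef (R : numClosedFieldType) k :
  (-1) ^+ k / (k`!)%:R * ('i / 2%:R) ^+ k * ('i / 2%:R) ^+ k * (2 ^ k * k`!)%:R
  = 2%:R^-1 ^+ k :> R.
Proof.
have fact_neq0 : (k`!)%:R != 0 :> R by rewrite pnatr_eq0 -lt0n fact_gt0.
have sqr_i2 : 'i / 2%:R * ('i / 2%:R) = - (2%:R * 2%:R)^-1 :> R.
  by rewrite mulrACA -expr2 sqrCi mulN1r invfM.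
transitivity (((-1) * ('i / 2%:R * ('i / 2%:R)) * 2%:R) ^+ k * ((k`!)%:R / (k`!)%:R) :> R).
  by rewrite !exprMn natrM natrX; ring.
by rewrite sqr_i2 divff // mulr1; congr (_ ^+ k); field.
Qed.

Unset Implicit Arguments.

Theorem mainTheorem7 (R : numClosedFieldType) (n : nat) (eta : 'M[R]_n)
    (Hn : (3 <= n)%N) (Hsym : eta^T = eta) (Hinv : eta \in unitmx)
    (l : nat) (a : 'I_l -> 'I_n) :
  ket eta a =
  \sum_(k < l.+1)
    fk k (@tpar R n l) *:
      ((2%:R^-1 *: xsq eta) ^+ k *
       \sum_(M : {set {set 'I_l}} | is_kmatching k M) matching_term eta a M).
Proof.
have xmonE : xmon R a = xmon_on a [set: 'I_l].
  by apply: eq_bigl => i; rewrite in_setT.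
have matching_sumE k : matching_sum (etaUp eta) a k [set: 'I_l] =
    \sum_(M | is_kmatching k M) matching_term eta a M.
  apply: eq_big => [M|M _]; first by rewrite /kmatching_in subsetT andbT.
  by rewrite /matching_term setTD.
rewrite /ket; apply: eq_bigr => k _.
rewrite iter_adop1 ?Eop0 ?Eop1 ?/mulop ?mulr0 // mulr1 iter_Eop xmonE.
rewrite iter_laplacian_xmon_on; last exact: etaUp_sym.
rewrite /Fpoly !exprZn -!scalerAl -!scalerAr !scalerA -matching_sumE.
congr (_ *: _); rewrite -ket_coef; ring.
Qed.
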